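(* Let $s\in(0,1)$, $N>2s$, $1<p<\frac{N+2s}{N-2s}$, $0<a\in L^\infty(\mathbb R^N)$, $f\in H^{-s}(\mathbb R^N)$, and $C_p:=(p\|a\|_{L^\infty})^{-\frac1{p-1}}\frac{p-1}{p}$. If $\|f\|_{H^{-s}(\mathbb R^N)}<C_pS_1^{\frac{p+1}{2(p-1)}}$, then $$\inf_{u\in H^s(\mathbb R^N),\ \|u\|_{L^{p+1}(\mathbb R^N)}=1}\Big\{C_p\|u\|_{H^s}^{\frac{2p}{p-1}}-\langle f,u\rangle\Big\}>0.$$
   Context: $\|u\|_{H^s}^2=\int_{\mathbb R^N}|u|^2+\iint_{\mathbb R^{2N}}\frac{|u(x)-u(y)|^2}{|x-y|^{N+2s}}dx\,dy$; $\langle\cdot,\cdot\rangle$ is the $H^{-s}$–$H^s$ duality; $S_1:=\inf_{u\in H^s\setminus\{0\}}\frac{\|u\|_{H^s}^2}{(\int|u|^{p+1})^{2/(p+1)}}$. *)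

From HB Require Import structures.
From mathcomp Require Import all_boot all_order all_algebra.
From mathcomp Require Import all_classical all_reals all_analysis.
Set Implicit Arguments. Unset Strict Implicit. Unset Printing Implicit Defensive.
Import Order.TTheory GRing.Theory Num.Theory.
Import numFieldNormedType.Exports.
Local Open Scope classical_set_scope.
Local Open Scope ring_scope.

(* Points of R^N are N-tuples of reals; N.-tuple R carries the product
   (Borel) sigma-algebra from MathComp-Analysis. *)

(* Iterated Lebesgue integral over R^n (of extended-real valued functions);
   for nonnegative measurable integrands this is the integral w.r.t. the
   n-dimensional Lebesgue measure (Tonelli). *)
Fixpoint iint {R : realType} (n : nat) : (n.-tuple R -> \bar R) -> \bar R :=
  match n return (n.-tuple R -> \bar R) -> \bar R with
  | 0 => fun F => F [tuple]
  | n'.+1 => fun F =>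
      (\int[@lebesgue_measure R]_(x in setT)
         iint (fun t : n'.-tuple R => F [tuple of x :: t]))%E
  end.

Definition lebN {R : realType} (n : nat) (A : set (n.-tuple R)) : \bar R :=
  iint (fun x => (\1_A x)%:E).

Definition eucl {R : realType} (n : nat) (x : n.-tuple R) : R :=
  Num.sqrt (\sum_(i < n) (tnth x i) ^+ 2).

Definition tsub {R : realType} (n : nat) (x y : n.-tuple R) : n.-tuple R :=
  [tuple tnth x i - tnth y i | i < n].

Definition Hs_sq {R : realType} (N : nat) (s : R) (u : N.-tuple R -> R) : \bar R :=
  (iint (fun x => (`|u x| ^+ 2)%:E) +
   iint (fun x => iint (fun y =>
     ((`|u x - u y| ^+ 2) / (eucl (tsub x y) `^ (N%:R + 2 * s)))%:E)))%E.

Definition inHs {R : realType} (N : nat) (s : R) (u : N.-tuple R -> R) : Prop :=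
  measurable_fun setT u /\ (Hs_sq s u < +oo)%E.

Definition Lint {R : realType} (N : nat) (q : R) (u : N.-tuple R -> R) : \bar R :=
  iint (fun x => (`|u x| `^ q)%:E).

Definition Linf_norm {R : realType} (N : nat) (a : N.-tuple R -> R) : R :=
  inf [set M : R | 0 <= M /\ lebN [set x | M < `|a x|] = 0%E].

Definition inLinf {R : realType} (N : nat) (a : N.-tuple R -> R) : Prop :=
  measurable_fun setT a /\
  exists M : R, lebN [set x | M < `|a x|] = 0%E.

Definition inHms {R : realType} (N : nat) (s : R)
    (f : (N.-tuple R -> R) -> R) : Prop :=
  (forall u v, inHs s u -> inHs s v -> f (u \+ v) = f u + f v) /\
  (forall (c : R) u, inHs s u -> f (fun x => c * u x) = c * f u) /\
  (exists C : R, forall u, inHs s u -> `|f u| <= C * Num.sqrt (fine (Hs_sq s u))).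

Definition Hms_norm {R : realType} (N : nat) (s : R)
    (f : (N.-tuple R -> R) -> R) : R :=
  sup [set r : R | exists u, inHs s u /\ (Hs_sq s u <= 1)%E /\ r = `|f u|].

Definition S1 {R : realType} (N : nat) (s p : R) : R :=
  inf [set r : R | exists u : N.-tuple R -> R,
         inHs s u /\ Hs_sq s u != 0%E /\ (Lint (p + 1) u < +oo)%E /\
         r = fine (Hs_sq s u) / (fine (Lint (p + 1) u)) `^ (2 / (p + 1))].

Definition Cp {R : realType} (N : nat) (p : R) (a : N.-tuple R -> R) : R :=
  (p * Linf_norm a) `^ (- (1 / (p - 1))) * ((p - 1) / p).

Definition Jfun {R : realType} (N : nat) (s p : R) (a : N.-tuple R -> R)
    (f : (N.-tuple R -> R) -> R) (u : N.-tuple R -> R) : R :=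
  Cp p a * (Num.sqrt (fine (Hs_sq s u))) `^ (2 * p / (p - 1)) - f u.

(* Write q := (p + 1) / (p - 1) and t0 := sqrt S_1.  If ||u||_{L^(p+1)} = 1
   then u competes in the infimum defining S_1, so t := ||u||_{H^s} >= t0,
   while |<f,u>| <= ||f|| t.  Hence
     J(u) >= C_p t^(1+q) - ||f|| t >= t (C_p t0^q - ||f||)
          >= t0 (C_p t0^q - ||f||),
   and C_p t0^q = C_p S_1^((p+1)/(2(p-1))) > ||f|| by hypothesis.  The same
   hypothesis forces S_1 > 0, so the quotient set defining S_1 is nonempty and
   normalizing one of its elements shows that the constraint set is nonempty. *)

From HB Require Import structures.
From mathcomp Require Import all_boot all_order all_algebra.
From mathcomp Require Import all_classical all_reals all_analysis.
From mathcomp Require Import measurable_realfun.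
From mathcomp Require Import ring lra.
Import Order.TTheory GRing.Theory Num.Theory.
Local Open Scope classical_set_scope.
Local Open Scope ring_scope.

Section iterated_integral.
Set Implicit Arguments.
Context {R : realType}.
Local Open Scope ereal_scope.

Lemma iint_ge0 n (F : n.-tuple R -> \bar R) :
  (forall t, 0 <= F t) -> 0 <= iint F.
Proof.
elim: n F => [|n IH] F F0 /=; first exact: F0.
by apply: integral_ge0 => x _; apply: IH.
Qed.

Lemma measurable_fun_iint n d (T : measurableType d)
    (G : T * n.-tuple R -> \bar R) :
  measurable_fun setT G -> (forall z, 0 <= G z) ->
  measurable_fun setT (fun x => iint (fun t => G (x, t))).
Proof.
elim: n d T G => [|n IH] d T G mG G0 /=.
  by apply: (measurableT_comp mG); apply: measurable_fun_pair.
pose G' (z : (T * R) * n.-tuple R) := G (z.1.1, [tuple of z.1.2 :: z.2]).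
have mG' : measurable_fun setT G'.
  apply: (measurableT_comp mG); apply: measurable_fun_pair.
    exact: (measurableT_comp measurable_fst measurable_fst).
  apply: measurable_cons; last exact: measurable_snd.
  exact: (measurableT_comp measurable_snd measurable_fst).
apply: (measurable_fun_fubini_tonelli_F (m2 := lebesgue_measure)
  (fun z => iint (fun t => G' (z, t))) (IH _ _ G' mG' (fun z => G0 _))).
by move=> z; apply: iint_ge0 => t; exact: G0.
Qed.

Lemma measurable_iint_cons n (F : n.+1.-tuple R -> \bar R) :
  measurable_fun setT F -> (forall t, 0 <= F t) ->
  measurable_fun setT
    (fun x : measurableTypeR R => iint (fun t => F [tuple of x :: t])).
Proof.
move=> mF F0; apply: (@measurable_fun_iint n _ (measurableTypeR R)
  (fun z => F [tuple of z.1 :: z.2])) => [|z]; last exact: F0.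
apply: (measurableT_comp mF).
by apply: measurable_cons; [exact: measurable_fst|exact: measurable_snd].
Qed.

Lemma measurable_tuple_cons n (x : R) (F : n.+1.-tuple R -> \bar R) :
  measurable_fun setT F ->
  measurable_fun setT (fun t : n.-tuple R => F [tuple of x :: t]).
Proof.
move=> mF; apply: (measurableT_comp mF).
by apply: measurable_cons; [exact: measurable_cst|exact: measurable_id].
Qed.

Lemma ge0_iintZl n (F : n.-tuple R -> \bar R) (k : R) :
  measurable_fun setT F -> (forall t, 0 <= F t) -> (0 <= k)%R ->
  iint (fun t => k%:E * F t) = k%:E * iint F.
Proof.
elim: n F => [|n IH] F mF F0 k0 //=.
transitivity (\int[lebesgue_measure]_(x in setT)
    (k%:E * iint (fun t : n.-tuple R => F [tuple of x :: t]))).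
  by apply: eq_integral => x _; apply: IH => //; exact: measurable_tuple_cons.
apply: ge0_integralZl_EFin => //; last exact: measurable_iint_cons.
by move=> x _; apply: iint_ge0.
Qed.

Lemma ge0_iint_eq0_zeros n (F G : n.-tuple R -> \bar R) :
  measurable_fun setT F -> measurable_fun setT G ->
  (forall t, 0 <= F t) -> (forall t, 0 <= G t) ->
  (forall t, F t = 0 -> G t = 0) -> iint F = 0 -> iint G = 0.
Proof.
elim: n F G => [|n IH] F G mF mG F0 G0 FG /=; first exact: FG.
set phi := fun x => iint (fun t : n.-tuple R => F [tuple of x :: t]).
set psi := fun x => iint (fun t : n.-tuple R => G [tuple of x :: t]).
have mphi : measurable_fun setT phi := measurable_iint_cons mF F0.
have mpsi : measurable_fun setT psi := measurable_iint_cons mG G0.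
move=> intF0.
have abs_phi0 : \int[lebesgue_measure]_(x in setT) `|phi x| = 0.
  rewrite -intF0; apply: eq_integral => x _.
  by rewrite gee0_abs //; apply: iint_ge0.
have ae_phi :=
  (ae_eq_integral_abs (@lebesgue_measure R) measurableT mphi).1 abs_phi0.
have ae_psi : ae_eq lebesgue_measure setT psi (cst 0).
  apply: filterS ae_phi => x phix0 Tx; apply: IH (phix0 Tx) => //.
  - exact: measurable_tuple_cons.
  - exact: measurable_tuple_cons.
  - move=> t; exact: FG.
have := @ae_eq_integral _ (measurableTypeR R) R lebesgue_measure setT
  (cst 0) psi measurableT mpsi (measurable_cst _) ae_psi.
by rewrite integral0.
Qed.

End iterated_integral.

Section fractional_sobolev.
Set Implicit Arguments.
Context {R : realType} {N : nat}.
Implicit Types (u : N.-tuple R -> R) (s q c : R).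

Lemma measurable_gagliardo_kernel s u : measurable_fun setT u ->
  measurable_fun setT (fun z : N.-tuple R * N.-tuple R =>
    ((`|u z.1 - u z.2| ^+ 2) / (eucl (tsub z.1 z.2) `^ (N%:R + 2 * s)))%:E).
Proof.
move=> mu; apply/measurable_EFinP; apply: measurable_funM.
  apply/measurable_funX/(measurableT_comp (@normr_measurable R setT)).
  by apply: measurable_funB; apply: measurableT_comp.
have -> : (fun z : N.-tuple R * N.-tuple R =>
    (eucl (tsub z.1 z.2) `^ (N%:R + 2 * s))^-1) =
  (fun z => Num.sqrt (\sum_(i < N) (tnth z.1 i - tnth z.2 i) ^+ 2)
              `^ (- (N%:R + 2 * s))).
  apply: funext => z; rewrite powRN /eucl /tsub.
  by under eq_bigr do rewrite tnth_mktuple.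
apply: (measurableT_comp (measurable_powR _)).
apply: (measurableT_comp (continuous_measurable_fun (@sqrt_continuous R))).
apply: measurable_sum => i; apply: measurable_funX; apply: measurable_funB.
  exact: (measurableT_comp (measurable_tnth i) measurable_fst).
exact: (measurableT_comp (measurable_tnth i) measurable_snd).
Qed.

Lemma measurable_normr_powR q u : measurable_fun setT u ->
  measurable_fun setT (fun x => (`|u x| `^ q)%:E).
Proof.
move=> mu; apply/measurable_EFinP.
apply: (measurableT_comp (measurable_powR q)).
exact: (measurableT_comp (@normr_measurable R setT)).
Qed.

Lemma measurable_normr_sqr u : measurable_fun setT u ->
  measurable_fun setT (fun x => (`|u x| ^+ 2)%:E).
Proof.
move=> mu; apply/measurable_EFinP; apply: measurable_funX.
exact: (measurableT_comp (@normr_measurable R setT)).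
Qed.

Lemma Hs_sq_ge0 s u : (0 <= Hs_sq s u)%E.
Proof.
apply: adde_ge0; apply: iint_ge0 => x; first by rewrite lee_fin sqr_ge0.
by apply: iint_ge0 => y; rewrite lee_fin divr_ge0 ?sqr_ge0 ?powR_ge0.
Qed.

Lemma inHs_fin_num s u : inHs s u -> Hs_sq s u \is a fin_num.
Proof. by case=> _ Hs_lt; rewrite ge0_fin_numE ?Hs_sq_ge0. Qed.

Lemma Hs_sqZ s c u : measurable_fun setT u ->
  Hs_sq s (fun x => c * u x) = ((c ^+ 2)%:E * Hs_sq s u)%E.
Proof.
move=> mu; have c2_ge0 : 0 <= c ^+ 2 := sqr_ge0 c.
have mK := measurable_gagliardo_kernel s mu.
have K_ge0 (x y : N.-tuple R) : (0 <= ((`|u x - u y| ^+ 2) /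
    (eucl (tsub x y) `^ (N%:R + 2 * s)))%:E)%E.
  by rewrite lee_fin divr_ge0 ?sqr_ge0 ?powR_ge0.
rewrite /Hs_sq ge0_muleDr; first last.
- by apply: iint_ge0 => x; apply: iint_ge0.
- by apply: iint_ge0 => x; rewrite lee_fin sqr_ge0.
congr (_ + _)%E.
  rewrite -ge0_iintZl //.
  - congr iint; apply: funext => x.
    by rewrite -EFinM normrM exprMn real_normK ?num_real.
  - exact: measurable_normr_sqr.
rewrite -ge0_iintZl //.
- congr iint; apply: funext => x.
  rewrite -ge0_iintZl //; last exact: (measurable_fun_pair2 x mK).
  congr iint; apply: funext => y.
  by rewrite -EFinM -mulrBr normrM exprMn real_normK ?num_real ?mulrA.
- exact: (measurable_fun_iint mK (fun z => K_ge0 z.1 z.2)).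
- by move=> x; apply: iint_ge0.
Qed.

Lemma inHsZ s c u : inHs s u -> inHs s (fun x => c * u x).
Proof.
case=> mu Hs_lt; split; first exact: measurable_funM.
by rewrite Hs_sqZ // lte_mul_pinfty // lee_fin sqr_ge0.
Qed.

Lemma Hs_sq0 s : Hs_sq s (fun _ : N.-tuple R => 0) = 0%E.
Proof.
have := @Hs_sqZ s 0 (fun _ => 0%R) (measurable_cst _).
by rewrite expr0n mul0e; under eq_fun do rewrite mul0r.
Qed.

Lemma inHs0 s : inHs s (fun _ : N.-tuple R => 0).
Proof. by split; [exact: measurable_cst|rewrite Hs_sq0 ltry]. Qed.

Lemma Lint_ge0 q u : (0 <= Lint q u)%E.
Proof. by apply: iint_ge0 => x; rewrite lee_fin powR_ge0. Qed.

Lemma LintZ q c u : measurable_fun setT u ->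
  Lint q (fun x => c * u x) = ((`|c| `^ q)%:E * Lint q u)%E.
Proof.
move=> mu; rewrite /Lint -ge0_iintZl ?powR_ge0 //.
- by congr iint; apply: funext => x; rewrite -EFinM normrM powRM.
- exact: measurable_normr_powR.
Qed.

Lemma Lint_normalize q u (L : R) : q != 0 -> measurable_fun setT u ->
  0 < L -> Lint q u = L%:E -> Lint q (fun x => L `^ (- q^-1) * u x) = 1%E.
Proof.
move=> q0 mu L_gt0 LE.
rewrite LintZ // LE ger0_norm ?powR_ge0 // -powRrM mulNr mulVf //.
by rewrite powR_inv1 ?(ltW L_gt0) // -EFinM mulVf ?gt_eqF.
Qed.

Lemma Hs_sq_eq0_Lint s q u : q != 0 -> measurable_fun setT u ->
  Hs_sq s u = 0%E -> Lint q u = 0%E.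
Proof.
move=> q0 mu /eqP; rewrite /Hs_sq padde_eq0; first last.
- by apply: iint_ge0 => x; apply: iint_ge0 => y;
    rewrite lee_fin divr_ge0 ?sqr_ge0 ?powR_ge0.
- by apply: iint_ge0 => x; rewrite lee_fin sqr_ge0.
case/andP => /eqP L2_0 _; apply: ge0_iint_eq0_zeros L2_0.
- exact: measurable_normr_sqr.
- exact: measurable_normr_powR.
- by move=> x; rewrite lee_fin sqr_ge0.
- by move=> x; rewrite lee_fin powR_ge0.
move=> x /eqP; rewrite eqe sqrf_eq0 normr_eq0 => /eqP ->.
by rewrite normr0 powR0.
Qed.

End fractional_sobolev.

Section dual_norm.
Set Implicit Arguments.
Context {R : realType} {N : nat} (s : R) (f : (N.-tuple R -> R) -> R).
Hypothesis f_Hms : inHms s f.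

Lemma inHms_at0 : f (fun _ => 0) = 0.
Proof.
have [_ [fZ _]] := f_Hms; have := fZ 0 _ (inHs0 s).
have -> : (fun x : N.-tuple R => 0 * (fun _ => 0 : R) x) = (fun _ => 0).
  by apply: funext => x; rewrite mul0r.
by rewrite mul0r.
Qed.

Lemma has_ubound_Hms_ball : has_ubound
  [set r : R | exists u, inHs s u /\ (Hs_sq s u <= 1)%E /\ r = `|f u|].
Proof.
have [_ [_ [C fC]]] := f_Hms; exists (Num.max C 0) => _ [u [u_Hs [Hs_le1 ->]]].
have h_ge0 : 0 <= fine (Hs_sq s u) by apply/fine_ge0/Hs_sq_ge0.
have h_le1 : fine (Hs_sq s u) <= 1.
  by rewrite -lee_fin fineK ?inHs_fin_num.
have t_le1 : Num.sqrt (fine (Hs_sq s u)) <= 1 by rewrite -sqrtr1 ler_sqrt.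
have t_ge0 := sqrtr_ge0 (fine (Hs_sq s u)).
have C_le : C <= Num.max C 0 by rewrite le_max lexx.
have max_ge0 : 0 <= Num.max C 0 by rewrite le_max lexx orbT.
apply: le_trans (fC u u_Hs) _; nra.
Qed.

Lemma Hms_norm_ge0 : 0 <= Hms_norm s f.
Proof.
apply: (ub_le_sup has_ubound_Hms_ball); exists (fun _ => 0).
by rewrite Hs_sq0 inHms_at0 normr0; split; [exact: inHs0|split].
Qed.

Lemma normr_le_Hms_norm u : inHs s u ->
  `|f u| <= Hms_norm s f * Num.sqrt (fine (Hs_sq s u)).
Proof.
move=> u_Hs; have [_ [fZ [C fC]]] := f_Hms.
set h := fine (Hs_sq s u).
have Hs_E : Hs_sq s u = h%:E by rewrite fineK ?inHs_fin_num.
have h_ge0 : 0 <= h by rewrite -lee_fin -Hs_E Hs_sq_ge0.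
have [h0|h_neq0] := eqVneq h 0.
  by apply: le_trans (fC u u_Hs) _; rewrite -/h h0 sqrtr0 !mulr0.
set t := Num.sqrt h.
have t_gt0 : 0 < t by rewrite sqrtr_gt0 lt_def h_neq0.
pose v x := t^-1 * u x.
have v_Hs : inHs s v := inHsZ t^-1 u_Hs.
have Hs_v : Hs_sq s v = 1%E.
  rewrite /v Hs_sqZ; last exact: u_Hs.1.
  by rewrite Hs_E -EFinM exprVn sqr_sqrtr // mulVf.
have fv_le : `|f v| <= Hms_norm s f.
  by apply: (ub_le_sup has_ubound_Hms_ball); exists v; rewrite Hs_v.
have -> : `|f u| = t * `|f v|.
  rewrite fZ // normrM ger0_norm ?invr_ge0 ?(ltW t_gt0) //.
  by rewrite mulrA mulfV ?gt_eqF // mul1r.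
by rewrite mulrC ler_wpM2r // ltW.
Qed.

End dual_norm.

Section sobolev_constant.
Set Implicit Arguments.
Context {R : realType} {N : nat} {s p : R}.
Implicit Types u : N.-tuple R -> R.

Let S1_set := [set r : R | exists u : N.-tuple R -> R,
  inHs s u /\ Hs_sq s u != 0%E /\ (Lint (p + 1) u < +oo)%E /\
  r = fine (Hs_sq s u) / (fine (Lint (p + 1) u)) `^ (2 / (p + 1))].

Let S1_inf : S1 N s p = inf S1_set. Proof. by []. Qed.

Let S1_lbound0 : lbound S1_set 0.
Proof.
move=> _ [u [_ [_ [_ ->]]]].
by rewrite divr_ge0 ?powR_ge0 // fine_ge0 // Hs_sq_ge0.
Qed.

Lemma S1_ge0 : 0 <= S1 N s p.
Proof.
rewrite S1_inf.
have [S1_ne|S1_empty] := pselect (S1_set !=set0).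
  exact: lb_le_inf S1_ne S1_lbound0.
suff -> : S1_set = set0 by rewrite inf0.
by apply/seteqP; split => // r Sr; apply: S1_empty; exists r.
Qed.

Hypothesis p1_neq0 : p + 1 != 0.

Lemma S1_le_Hs_sq u : inHs s u -> Lint (p + 1) u = 1%E ->
  S1 N s p <= fine (Hs_sq s u).
Proof.
move=> u_Hs Lu1; apply: ge_inf; first by exists 0; exact: S1_lbound0.
exists u; split => //; split.
  apply/eqP => /(Hs_sq_eq0_Lint _ _ p1_neq0 u_Hs.1).
  by rewrite Lu1 => /eqP; rewrite eqe oner_eq0.
by rewrite Lu1 ltry powR1 divr1.
Qed.

Lemma S1_gt0_normalized : 0 < S1 N s p ->
  exists u, inHs s u /\ Lint (p + 1) u = 1%E.
Proof.
rewrite S1_inf => S1_gt0.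
have [[r Sr]|S1_empty] := pselect (S1_set !=set0); last first.
  suff S1_set0 : S1_set = set0 by rewrite S1_set0 inf0 ltxx in S1_gt0.
  by apply/seteqP; split => // r Sr; apply: S1_empty; exists r.
have S1_le_r : inf S1_set <= r by apply: ge_inf Sr; exists 0.
case: Sr S1_le_r => u [u_Hs [_ [L_lt ->]]].
set L := fine (Lint (p + 1) u) => S1_le.
have L_E : Lint (p + 1) u = L%:E by rewrite fineK // ge0_fin_numE ?Lint_ge0.
(* For L = 0 the quotient is h / 0 = 0, below S_1 > 0. *)
have L_gt0 : 0 < L.
  rewrite lt_def fine_ge0 ?Lint_ge0 // andbT; apply: contraTneq S1_le => ->.
  by rewrite powR0 ?invr0 ?mulr0 -?ltNge // mulf_neq0 ?invr_eq0 ?pnatr_eq0.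
exists (fun x => L `^ (- (p + 1)^-1) * u x); split; first exact: inHsZ.
exact: Lint_normalize _ p1_neq0 u_Hs.1 L_gt0 L_E.
Qed.

End sobolev_constant.

Section energy_bounds.
Context {R : realType}.

Lemma Cp_ge0 N (p : R) (a : N.-tuple R -> R) :
  1 <= p -> 0 <= Cp p a.
Proof.
move=> p_ge1; rewrite mulr_ge0 ?powR_ge0 // divr_ge0 ?subr_ge0 //.
exact: le_trans ler01 p_ge1.
Qed.

Lemma powR_affine_lower_bound {C K q t0 t : R} :
  0 <= C -> 0 <= q -> 0 < t0 -> t0 <= t -> K <= C * t0 `^ q ->
  t0 * (C * t0 `^ q - K) <= C * t `^ (1 + q) - K * t.
Proof.
move=> C_ge0 q_ge0 t0_gt0 t0_le K_le.
have t_gt0 : 0 < t := lt_le_trans t0_gt0 t0_le.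
rewrite powRD ?powRr1 ?(ltW t_gt0) //; last first.
  by apply/implyP => _; rewrite gt_eqF.
have pow_le : t0 `^ q <= t `^ q by rewrite ge0_ler_powR // nnegrE ltW.
have C_pow_le : C * (t * t0 `^ q) <= C * (t * t `^ q).
  by rewrite ler_wpM2l // ler_wpM2l // ltW.
have t0_mul_le : t0 * (C * t0 `^ q - K) <= t * (C * t0 `^ q - K).
  by rewrite ler_wpM2r // subr_ge0.
lra.
Qed.

End energy_bounds.

Theorem lemma3p5 (R : realType) (N : nat) (s p : R)
    (a : N.-tuple R -> R) (f : (N.-tuple R -> R) -> R) :
  0 < s -> s < 1 -> 2 * s < N%:R ->
  1 < p -> p < (N%:R + 2 * s) / (N%:R - 2 * s) ->
  inLinf a -> (forall x, 0 < a x) ->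
  inHms s f ->
  Hms_norm s f < Cp p a * S1 N s p `^ ((p + 1) / (2 * (p - 1))) ->
  0 < inf [set r : R | exists u : N.-tuple R -> R,
             inHs s u /\ Lint (p + 1) u = 1%E /\ r = Jfun s p a f u].
Proof.
move=> _ _ _ p_gt1 _ _ _ f_Hms f_small.
have p_gt0 : 0 < p := lt_trans ltr01 p_gt1.
have p1_neq0 : p + 1 != 0 by rewrite gt_eqF // addr_gt0.
have p_sub1_neq0 : p - 1 != 0 by rewrite subr_eq0 gt_eqF.
set q := (p + 1) / (p - 1).
have q_ge0 : 0 <= q by rewrite divr_ge0 ?subr_ge0 ?addr_ge0 ?ltW.
set K := Hms_norm s f in f_small.
have K_ge0 : 0 <= K := Hms_norm_ge0 f_Hms.
(* As [0 `^ e = 0], S_1 = 0 would give ||f|| < 0. *)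
have S1_gt0 : 0 < S1 N s p.
  rewrite lt_def S1_ge0 andbT; apply: contraTneq f_small => ->.
  by rewrite powR0 ?mulr0 -?leNgt // mulf_neq0 ?invr_eq0 ?mulf_neq0.
set t0 := Num.sqrt (S1 N s p).
have t0_gt0 : 0 < t0 by rewrite sqrtr_gt0.
have S1_pow : S1 N s p `^ ((p + 1) / (2 * (p - 1))) = t0 `^ q.
  rewrite /t0 -powR12_sqrt ?S1_ge0 // -powRrM; congr (_ `^ _).
  by rewrite /q; field.
rewrite S1_pow in f_small.
have [u1 [u1_Hs u1_L]] := S1_gt0_normalized p1_neq0 S1_gt0.
apply: (@lt_le_trans _ _ (t0 * (Cp p a * t0 `^ q - K))).
  by rewrite mulr_gt0 // subr_gt0.
apply: lb_le_inf; first by exists (Jfun s p a f u1), u1.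
move=> _ [u [u_Hs [u_L ->]]].
have t0_le : t0 <= Num.sqrt (fine (Hs_sq s u)).
  rewrite ler_sqrt; [exact: S1_le_Hs_sq u_L|exact/fine_ge0/Hs_sq_ge0].
have fu_le : f u <= K * Num.sqrt (fine (Hs_sq s u)).
  exact: le_trans (ler_norm _) (normr_le_Hms_norm f_Hms u_Hs).
rewrite /Jfun (_ : 2 * p / (p - 1) = 1 + q); last by rewrite /q; field.
have C_ge0 : 0 <= Cp p a by apply/Cp_ge0/ltW.
apply: le_trans
  (powR_affine_lower_bound C_ge0 q_ge0 t0_gt0 t0_le (ltW f_small)) _.
by rewrite lerD2l lerN2.
Qed.
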